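(* Let $A$ be an abelian group, $I$ a finite set, and $(A_i)_{i\in I}$ a family of subgroups of $A$ such that the lattice of subgroups of $A$ generated by the $A_i$ (under the operations $+$ and $\cap$) is distributive. Let $n$ be a positive integer and $(a(i_0,\dots,i_n))_{i_0,\dots,i_n\in I}$ a family of elements of $A$ such that $$\sum_{j=0}^{n+1}(-1)^j\,a(i_0,\dots,\widehat{i_j},\dots,i_{n+1})\equiv 0\pmod{A_{i_0}+\cdots+A_{i_{n+1}}}\quad\text{for all } i_0,\dots,i_{n+1}\in I.$$ Then there exists a family $(x(i_0,\dots,i_{n-1}))_{i_0,\dots,i_{n-1}\in I}$ of elements of $A$ such that $$\sum_{j=0}^{n}(-1)^j\,x(i_0,\dots,\widehat{i_j},\dots,i_n)\equiv a(i_0,\dots,i_n)\pmod{A_{i_0}+\cdots+A_{i_n}}\quad\text{for all } i_0,\dots,i_n\in I.$$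
   Context: A congruence $u\equiv v \pmod{B}$ for a subgroup $B$ of $A$ means $u-v\in B$. A hat $\widehat{i_j}$ means that the entry $i_j$ is omitted. A lattice is distributive if one (equivalently, each) of its two operations distributes over the other. *)

From mathcomp Require Import all_boot all_order all_algebra.
Set Implicit Arguments. Unset Strict Implicit. Unset Printing Implicit Defensive.
Import GRing.Theory.
Local Open Scope ring_scope.

Definition is_subgroup (A : zmodType) (S : A -> Prop) : Prop :=
  S 0 /\ forall x y, S x -> S y -> S (x - y).

Definition sumset (A : zmodType) (X Y : A -> Prop) : A -> Prop :=
  fun z => exists x y, X x /\ Y y /\ z = x + y.
Definition capset (A : zmodType) (X Y : A -> Prop) : A -> Prop :=
  fun z => X z /\ Y z.

Inductive gen_lattice (A : zmodType) (I : Type) (S : I -> A -> Prop)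
  : (A -> Prop) -> Prop :=
| gl_base i : gen_lattice S (S i)
| gl_sum X Y : gen_lattice S X -> gen_lattice S Y -> gen_lattice S (sumset X Y)
| gl_cap X Y : gen_lattice S X -> gen_lattice S Y -> gen_lattice S (capset X Y).

Definition distributive_gen (A : zmodType) (I : Type) (S : I -> A -> Prop) : Prop :=
  forall X Y Z, gen_lattice S X -> gen_lattice S Y -> gen_lattice S Z ->
    forall z, capset X (sumset Y Z) z <-> sumset (capset X Y) (capset X Z) z.

Definition subsum (A : zmodType) (I : Type) (S : I -> A -> Prop) (m : nat)
  (i : 'I_m -> I) : A -> Prop :=
  fun y => exists f : 'I_m -> A, (forall k, S (i k) (f k)) /\ y = \sum_(k < m) f k.

Definition face (I : finType) (m : nat) (j : 'I_m.+1) (i : {ffun 'I_m.+1 -> I})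
  : {ffun 'I_m -> I} := [ffun k => i (lift j k)].

Definition coboundary (A : zmodType) (I : finType) (m : nat)
  (a : {ffun 'I_m -> I} -> A) (i : {ffun 'I_m.+1 -> I}) : A :=
  \sum_(j < m.+1) a (face j i) *~ ((-1) ^+ j).

From mathcomp Require Import all_boot all_order all_algebra.
From Stdlib Require Import ClassicalEpsilon.
Set Implicit Arguments. Unset Strict Implicit. Unset Printing Implicit Defensive.
Import GRing.Theory.
Local Open Scope ring_scope.

(* Induction on the set T of indices allowed in the tuples.  Pick p in T and
   put x0(u) := a(p, u).  The cocycle condition at (p, i) says that
   a(i) - (d x0)(i) is congruent mod A_{i_0} + ... + A_{i_n} to an element
   c(i) of A_p.  The cochain c is then a cocycle for the family A_p ∩ A_k on
   T \ {p}: its coboundary lies in A_p and, since d d = 0, in the sum of the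
   A_{i_k}, so distributivity splits it along the A_p ∩ A_{i_k}.  By induction
   (strengthened so that solutions stay in any subgroup containing the A_k,
   here A_p) c = d y mod these sums, and x := x0 + y solves the
   problem: tuples avoiding p are handled by the induction, and for tuples
   through p every element of A_p vanishes modulo the sum. *)

Section Subgroups.
Variable A : zmodType.
Implicit Types P Q : A -> Prop.

Lemma subgroupN P : is_subgroup P -> forall x, P x -> P (- x).
Proof. by move=> [P0 PB] x Px; rewrite -sub0r; apply: PB. Qed.

Lemma subgroupD P : is_subgroup P -> forall x y, P x -> P y -> P (x + y).
Proof. by move=> HP x y Px Py; rewrite -[y]opprK; apply: HP.2 => //; apply: subgroupN. Qed.

Lemma subgroupMz P : is_subgroup P -> forall x z, P x -> P (x *~ z).
Proof.
move=> HP x z Px; have Pxn k : P (x *+ k).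
  by elim: k => [|k IHk]; [rewrite mulr0n; apply: HP.1 | rewrite mulrS; apply: subgroupD].
by case: z => k; rewrite ?NegzE ?mulrNz -pmulrn //; apply: subgroupN.
Qed.

Lemma subgroup_sum P : is_subgroup P -> forall m (F : 'I_m -> A),
  (forall k, P (F k)) -> P (\sum_(k < m) F k).
Proof. by move=> HP m F PF; apply: (big_ind P) => //; [apply: HP.1 | apply: subgroupD]. Qed.

Lemma subgroupI P Q : is_subgroup P -> is_subgroup Q -> is_subgroup (capset P Q).
Proof.
move=> HP HQ; split; first by split; [apply: HP.1 | apply: HQ.1].
by move=> x y [Px Qx] [Py Qy]; split; [apply: HP.2 | apply: HQ.2].
Qed.

End Subgroups.

Section Cochains.
Variables (A : zmodType) (I : finType).

Definition ffcons m (p : I) (i : {ffun 'I_m -> I}) : {ffun 'I_m.+1 -> I} :=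
  [ffun k => if unlift ord0 k is Some k' then i k' else p].

Lemma ffcons0 m p (i : {ffun 'I_m -> I}) : ffcons p i ord0 = p.
Proof. by rewrite ffunE unlift_none. Qed.

Lemma face0_ffcons m p (i : {ffun 'I_m -> I}) : face ord0 (ffcons p i) = i.
Proof. by apply/ffunP => k; rewrite !ffunE liftK. Qed.

Lemma ffcons_face0 m (i : {ffun 'I_m.+1 -> I}) : ffcons (i ord0) (face ord0 i) = i.
Proof. by apply/ffunP => k; rewrite ffunE; case: unliftP => [k'|] ->; rewrite ?ffunE. Qed.

Lemma face_lift0_ffcons m p (i : {ffun 'I_m.+1 -> I}) (j : 'I_m.+1) :
  face (lift ord0 j) (ffcons p i) = ffcons p (face j i).
Proof.
apply/ffunP => k; rewrite !ffunE; case: (unliftP ord0 k) => [k'|] ->.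
  have -> : lift (lift ord0 j) (lift ord0 k') = lift ord0 (lift j k').
    by apply: val_inj; rewrite /= /bump !add1n ltnS; case: leqP.
  by rewrite !liftK ffunE.
by rewrite (_ : lift (lift ord0 j) (@ord0 m) = ord0) ?unlift_none //; apply: val_inj.
Qed.

Lemma ffcons_on (T : {set I}) m p (i : {ffun 'I_m -> I}) :
  p \in T -> i \in ffun_on T -> ffcons p i \in ffun_on T.
Proof. by move=> Tp /ffun_onP Ti; apply/ffun_onP => k; rewrite ffunE; case: unlift. Qed.

Lemma face_on (T : {set I}) m (j : 'I_m.+1) (i : {ffun 'I_m.+1 -> I}) :
  i \in ffun_on T -> face j i \in ffun_on T.
Proof. by move=> /ffun_onP Ti; apply/ffun_onP => k; rewrite ffunE. Qed.

Lemma eq_coboundary m (b b' : {ffun 'I_m -> I} -> A) :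
  b =1 b' -> coboundary b =1 coboundary b'.
Proof. by move=> eq_b i; apply: eq_bigr => j _; rewrite eq_b. Qed.

Lemma coboundaryD m (b b' : {ffun 'I_m -> I} -> A) i :
  coboundary (fun u => b u + b' u) i = coboundary b i + coboundary b' i.
Proof. by rewrite /coboundary -big_split; apply: eq_bigr => j _; rewrite mulrzDl. Qed.

Lemma coboundaryB m (b b' : {ffun 'I_m -> I} -> A) i :
  coboundary (fun u => b u - b' u) i = coboundary b i - coboundary b' i.
Proof. by rewrite /coboundary -sumrB; apply: eq_bigr => j _; rewrite mulrzBl. Qed.

Lemma coboundary_ffcons m (b : {ffun 'I_m.+1 -> I} -> A) p i :
  coboundary b (ffcons p i) = b i - coboundary (fun u => b (ffcons p u)) i.
Proof.
rewrite /coboundary big_ord_recl /= expr0 mulr1z face0_ffcons -sumrN.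
congr (_ + _); apply: eq_bigr => j _.
by rewrite face_lift0_ffcons /bump add1n exprS mulN1r mulrNz.
Qed.

Lemma coboundaryK m (b : {ffun 'I_m -> I} -> A) i : coboundary (coboundary b) i = 0.
Proof.
elim: m b i => [|m IHm] b i.
  have face00 : face ord0 (face (lift ord0 ord0) i) = face ord0 (face ord0 i).
    by apply/ffunP => -[].
  rewrite /coboundary !big_ord_recl !big_ord0 /= !addr0 expr0 expr1 !mulr1z.
  by rewrite face00 mulrN1z subrr.
rewrite -(ffcons_face0 i) coboundary_ffcons.
rewrite (eq_coboundary (b := fun u => coboundary b (ffcons (i ord0) u))
  (b' := fun u => b u - coboundary (fun v => b (ffcons (i ord0) v)) u)); last first.
  by move=> u; rewrite coboundary_ffcons.
by rewrite coboundaryB IHm subr0 subrr.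
Qed.

Lemma coboundary_subgroup (P : A -> Prop) m (b : {ffun 'I_m -> I} -> A) i :
  is_subgroup P -> (forall u, P (b u)) -> P (coboundary b i).
Proof. by move=> HP Pb; apply: subgroup_sum => // j; apply: subgroupMz. Qed.

End Cochains.

Section Subsums.
Variables (A : zmodType) (I : finType) (S : I -> A -> Prop).
Hypothesis HS : forall k, is_subgroup (S k).

Lemma subsum_subgroup m (i : 'I_m -> I) : is_subgroup (subsum S i).
Proof.
split; first by exists (fun=> 0); split; [move=> k; apply: (HS _).1 | rewrite big1].
move=> _ _ [f [Sf ->]] [g [Sg ->]]; exists (fun k => f k - g k).
by split; [move=> k; apply: (HS _).2 | rewrite sumrB].
Qed.

Lemma subsum_mem m (i : 'I_m -> I) k y : S (i k) y -> subsum S i y.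
Proof.
move=> Sy; exists (fun k' => if k' == k then y else 0); split.
  by move=> k'; case: eqP => [->|_] //; apply: (HS _).1.
by rewrite (bigD1 k) //= eqxx big1 ?addr0 // => k' /negbTE ->.
Qed.

Lemma subsum_face m (j : 'I_m.+1) (i : {ffun 'I_m.+1 -> I}) y :
  subsum S (face j i) y -> subsum S i y.
Proof.
move=> [f [Sf ->]]; exists (fun k => if unlift j k is Some k' then f k' else 0).
split; last by rewrite (bigD1_ord j) //= unlift_none add0r; apply: eq_bigr => k _; rewrite liftK.
move=> k; case: unliftP => [k' ->|->]; last exact: (HS _).1.
by have := Sf k'; rewrite ffunE.
Qed.

Lemma subsum_coboundary m (b : {ffun 'I_m -> I} -> A) (i : {ffun 'I_m.+1 -> I}) :
  (forall j, subsum S (face j i) (b (face j i))) -> subsum S i (coboundary b i).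
Proof.
move=> Sb; apply: subgroup_sum; first exact: subsum_subgroup.
by move=> j; apply: subgroupMz; [apply: subsum_subgroup | apply: subsum_face (Sb j)].
Qed.

Lemma subsum_nil (i : {ffun 'I_0 -> I}) y : subsum S i y <-> y = 0.
Proof.
split=> [[f [_ ->]]|->]; first by rewrite big_ord0.
exact: (subsum_subgroup i).1.
Qed.

Lemma subsum_ffcons m (i : {ffun 'I_m.+1 -> I}) y :
  subsum S i y <-> sumset (S (i ord0)) (subsum S (face ord0 i)) y.
Proof.
split=> [[f [Sf ->]]|[u [_ [Su [[f [Sf ->]] ->]]]]].
  exists (f ord0), (\sum_(k < m) f (lift ord0 k)); split=> //; split; last by rewrite big_ord_recl.
  by exists (fun k => f (lift ord0 k)); split=> // k; rewrite ffunE.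
exists (fun k => if unlift ord0 k is Some k' then f k' else u); split.
  by move=> k; case: unliftP => [k' ->|->] //; have := Sf k'; rewrite ffunE.
by rewrite big_ord_recl unlift_none; congr (_ + _); apply: eq_bigr => k _; rewrite liftK.
Qed.

Lemma subsum_gen_lattice m (i : {ffun 'I_m.+1 -> I}) :
  exists2 Z, gen_lattice S Z & forall y, subsum S i y <-> Z y.
Proof.
elim: m i => [|m IHm] i.
  exists (S (i ord0)) => [|y]; first exact: gl_base.
  rewrite subsum_ffcons; split=> [[u [v [Su [/subsum_nil -> ->]]]]|Sy]; first by rewrite addr0.
  by exists y, 0; rewrite addr0 subsum_nil.
have [Z LZ subsumZ] := IHm (face ord0 i).
exists (sumset (S (i ord0)) Z) => [|y]; first by apply: gl_sum => //; apply: gl_base.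
rewrite subsum_ffcons; split=> [[u [v [Su [/subsumZ Zv ->]]]]|[u [v [Su [/subsumZ Zv ->]]]]];
  by exists u, v.
Qed.

End Subsums.

Lemma subsum_mono (A : zmodType) (I : finType) (S S' : I -> A -> Prop) m (i : 'I_m -> I) y :
  (forall k x, S k x -> S' k x) -> subsum S i y -> subsum S' i y.
Proof. by move=> SS' [f [Sf ->]]; exists f; split=> // k; apply: SS'. Qed.

Lemma distributive_gen_capl (A : zmodType) (I : finType) (S : I -> A -> Prop) p :
  distributive_gen S -> distributive_gen (fun k => capset (S p) (S k)).
Proof.
have gen_cap X : gen_lattice (fun k => capset (S p) (S k)) X -> gen_lattice S X.
  elim=> [k|X1 Y _ LX _ LY|X1 Y _ LX _ LY].
  - exact: gl_cap (gl_base S p) (gl_base S k).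
  - exact: gl_sum.
  - exact: gl_cap.
by move=> Hdist X Y Z /gen_cap LX /gen_cap LY /gen_cap LZ; apply: Hdist.
Qed.

Section Distributive.
Variables (A : zmodType) (I : finType) (S : I -> A -> Prop).
Hypotheses (HS : forall k, is_subgroup (S k)) (Hdist : distributive_gen S).

Lemma subsum_capl p m (i : {ffun 'I_m.+1 -> I}) y :
  S p y -> subsum S i y -> subsum (fun k => capset (S p) (S k)) i y.
Proof.
have HSp k : is_subgroup (capset (S p) (S k)) by apply: subgroupI.
elim: m i y => [|m IHm] i y Sy.
  rewrite subsum_ffcons => -[u [v [Su [/(subsum_nil HS) Ev Ey]]]].
  by apply: (subsum_mem HSp (k := ord0)); split; rewrite // Ey Ev addr0.
have [Z LZ subsumZ] := subsum_gen_lattice HS (face ord0 i).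
rewrite subsum_ffcons => -[u [v [Su [/subsumZ Zv Ey]]]].
have [|u' [v' [Su' [[Sv' /subsumZ Zv'] ->]]]] :=
  (Hdist (gl_base S p) (gl_base S (i ord0)) LZ y).1.
  by split=> //; exists u, v.
by rewrite subsum_ffcons; exists u', v'; split=> //; split=> //; apply: IHm.
Qed.

End Distributive.

Definition vanish_on (A : zmodType) (I : finType) (S : I -> A -> Prop) (T : {set I})
  m (b : {ffun 'I_m -> I} -> A) : Prop :=
  forall i, i \in ffun_on T -> subsum S i (b i).

Section InductionStep.
Variables (A : zmodType) (I : finType) (S : I -> A -> Prop).
Hypotheses (HS : forall k, is_subgroup (S k)) (Hdist : distributive_gen S).
Variables (T : {set I}) (p : I).
Hypothesis Tp : p \in T.
Variables (n : nat) (a : {ffun 'I_n.+1 -> I} -> A).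
Hypothesis cocycle_a : vanish_on S T (coboundary a).

Let x0 (u : {ffun 'I_n -> I}) := a (ffcons p u).

Lemma exists_defect : exists c : {ffun 'I_n.+1 -> I} -> A,
  (forall u, S p (c u)) /\ vanish_on S T (fun u => a u - coboundary x0 u - c u).
Proof.
have /choice[c Hc] u : exists c, S p c /\
    (u \in ffun_on T -> subsum S u (a u - coboundary x0 u - c)).
  have [Tu|_] := boolP (u \in ffun_on T); last by exists 0; split=> //; apply: (HS p).1.
  have := cocycle_a (ffcons_on Tp Tu).
  rewrite coboundary_ffcons subsum_ffcons ffcons0 face0_ffcons.
  by move=> -[c [v [Sc [Sv ->]]]]; exists c; rewrite addrC addKr.
by exists c; split=> [u|u Tu]; [case: (Hc u) | apply: (Hc u).2].
Qed.

Variable c : {ffun 'I_n.+1 -> I} -> A.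
Hypotheses (Sc : forall u, S p (c u))
  (defect_c : vanish_on S T (fun u => a u - coboundary x0 u - c u)).

Lemma defect_cocycle : vanish_on (fun k => capset (S p) (S k)) (T :\ p) (coboundary c).
Proof.
move=> i /ffun_onP Ti; have Ti' : i \in ffun_on T.
  by apply/ffun_onP => k; have := Ti k; rewrite in_setD1 => /andP[].
apply: subsum_capl => //; first exact: coboundary_subgroup.
rewrite (eq_coboundary (b' := fun u => (a u - coboundary x0 u) - (a u - coboundary x0 u - c u)));
  last by move=> u; rewrite opprB addrC subrK.
rewrite coboundaryB (coboundaryB a) coboundaryK subr0.
apply: (subsum_subgroup HS i).2; first exact: cocycle_a.
by apply: (subsum_coboundary HS) => j; apply/defect_c/face_on.
Qed.

Lemma defect_correction (y : {ffun 'I_n -> I} -> A) :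
  (forall u, S p (y u)) ->
  vanish_on (fun k => capset (S p) (S k)) (T :\ p) (fun u => coboundary y u - c u) ->
  vanish_on S T (fun u => coboundary (fun v => x0 v + y v) u - a u).
Proof.
move=> Sy y_solves i Ti; rewrite coboundaryD.
have subsum_i := subsum_subgroup HS i.
have [/existsP[k /eqP ik]|/existsPn avoid_p] := boolP [exists k, i k == p].
  (* a tuple through p: A_p is part of A_{i_0} + ... + A_{i_n} *)
  have Sp_subsum z : S p z -> subsum S i z by rewrite -ik; apply: subsum_mem.
  have -> : coboundary x0 i + coboundary y i - a i =
      coboundary y i - coboundary a (ffcons p i).
    by rewrite coboundary_ffcons opprB addrA (addrC (coboundary x0 i)).
  apply: subsum_i.2; first by apply: Sp_subsum; apply: coboundary_subgroup.
  have := cocycle_a (ffcons_on Tp Ti).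
  rewrite subsum_ffcons ffcons0 face0_ffcons => -[u [v [Su [Sv ->]]]].
  by apply: subgroupD => //; apply: Sp_subsum.
have Ti' : i \in ffun_on (T :\ p).
  by apply/ffun_onP => k; rewrite in_setD1 avoid_p (ffun_onP Ti).
have -> : coboundary x0 i + coboundary y i - a i =
    (coboundary y i - c i) - (a i - coboundary x0 i - c i).
  by rewrite !opprB addrA subrK addrA (addrC (coboundary x0 i)).
apply: subsum_i.2; last exact: defect_c.
by apply: subsum_mono (y_solves i Ti') => k x [].
Qed.

End InductionStep.

Lemma coboundary_solvable_on (A : zmodType) (I : finType) (S : I -> A -> Prop)
    (B : A -> Prop) (T : {set I}) :
  is_subgroup B -> (forall k, is_subgroup (S k)) -> distributive_gen S ->
  (forall k x, k \in T -> S k x -> B x) ->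
  forall n (a : {ffun 'I_n.+1 -> I} -> A),
  (forall u, B (a u)) -> vanish_on S T (coboundary a) ->
  exists2 x : {ffun 'I_n -> I} -> A,
    forall u, B (x u) & vanish_on S T (fun u => coboundary x u - a u).
Proof.
have [N ltTN] := ubnP #|T|; elim: N => // N IHN in S B T ltTN *.
move=> HB HS Hdist SB n a Ba cocycle_a.
have [T0|[p Tp]] := set_0Vmem T.
  exists (fun=> 0) => [_|i /ffun_onP Ti]; first exact: HB.1.
  by have := Ti ord0; rewrite T0 in_set0.
have [c [Sc defect_c]] := exists_defect HS Tp cocycle_a.
have [|||y Sy y_solves] := IHN _ (S p) (T :\ p) _ (HS p) _ (distributive_gen_capl (p := p) Hdist)
    _ n c Sc (defect_cocycle HS Hdist cocycle_a Sc defect_c).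
- by move: ltTN; rewrite (cardsD1 p T) Tp.
- by move=> k; apply: subgroupI.
- by move=> k x _ [].
exists (fun u => a (ffcons p u) + y u) => [u|].
  by apply: subgroupD => //; apply: SB _ _ Tp (Sy u).
exact: (defect_correction HS Tp cocycle_a defect_c Sy y_solves).
Qed.

Theorem theorem4 (A : zmodType) (I : finType) (S : I -> A -> Prop)
  (HS : forall i, is_subgroup (S i))
  (Hdist : distributive_gen S)
  (n : nat) (Hn : (0 < n)%N)
  (a : {ffun 'I_n.+1 -> I} -> A)
  (Ha : forall i : {ffun 'I_n.+2 -> I}, subsum S i (coboundary a i)) :
  exists x : {ffun 'I_n -> I} -> A,
    forall i : {ffun 'I_n.+1 -> I}, subsum S i (coboundary x i - a i).
Proof.
have subgroupT : is_subgroup (fun _ : A => True) by [].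
have cocycle_a : vanish_on S [set: I] (coboundary a) by move=> i _; apply: Ha.
have [x _ x_solves] := coboundary_solvable_on subgroupT HS Hdist
  (fun _ _ _ _ => Logic.I) (fun _ => Logic.I) cocycle_a.
by exists x => i; apply: x_solves; apply/ffun_onP => k; rewrite in_setT.
Qed.
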